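(* Let $\widehat V$ be the total space of $\mathcal{O}_{\mathbb{P}^1}(-1)^{\oplus 2}\to\mathbb{P}^1$ with projection $\pi:\widehat V\to\mathbb{P}^1$, let $a>0$, and let $f:[0,\infty)\to\mathbb{R}$ be a smooth function such that for all $\tau\ge 0$ \[ f'(\tau)>0,\qquad f'(\tau)+\tau f''(\tau)>0,\qquad \big(4a^2+\tau f'(\tau)\big)\big(f'(\tau)^2+\tau f'(\tau)f''(\tau)\big)=c \] for some constant $c>0$. Then \[ \omega_{co,a}=4a^2\,\pi^*\omega_{FS}+\sqrt{-1}\partial\bar\partial\, f(\tau) \] is a Kähler metric on $\widehat V$ which is Calabi-Yau: $\omega_{co,a}^3$ is a constant positive multiple of $(\sqrt{-1})^{9}\Omega\wedge\overline{\Omega}$, where $\Omega$ is a nowhere-vanishing holomorphic $(3,0)$-form on $\widehat V$; in particular $\omega_{co,a}$ is Ricci-flat.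
   Context: A point of $\widehat V$ is a triple $(\ell,s_1,s_2)$ with $\ell\in\mathbb{P}^1$ a line in $\mathbb{C}^2$ and $s_1,s_2\in\ell\subset\mathbb{C}^2$. The function $\tau:\widehat V\to[0,\infty)$ is $\tau=\|s_1\|^2+\|s_2\|^2$ (Euclidean norm on $\mathbb{C}^2$, i.e. the Fubini-Study hermitian metric on $\mathcal{O}(-1)$); in the chart $\{[X_1:X_2]: X_1\ne0\}$ with affine coordinate $u=X_2/X_1$ and $s_j=w_j(1,u)$, one has $\tau=(1+|u|^2)(|w_1|^2+|w_2|^2)$. $\omega_{FS}$ is the Fubini-Study form on $\mathbb{P}^1$, equal to $\sqrt{-1}\partial\bar\partial\log(1+|u|^2)$ in this chart. $\Omega$ is given in this chart by $du\wedge dw_1\wedge dw_2$ (up to sign), and analogously on the other chart. *)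

From Stdlib Require Import Reals.
From Coquelicot Require Import Coquelicot.
Open Scope R_scope.

(* A point of a coordinate chart of Vhat = Tot(O(-1)+O(-1)) is (u, w1, w2) in C^3,
   encoded by real coordinates p 0 .. p 5 (the remaining entries are irrelevant):
     u = p 0 + i p 1,  w1 = p 2 + i p 3,  w2 = p 4 + i p 5.
   Both standard charts ({X1<>0} with u = X2/X1, s_j = w_j (1,u), and
   {X2<>0} with v = X1/X2, s_j = w_j (v,1)) give exactly the same formulas below,
   so quantifying over all points p of this model chart covers both charts. *)
Definition pt := nat -> R.

Definition upd (p : pt) (i : nat) (t : R) : pt :=
  fun k => if Nat.eqb k i then t else p k.

Definition pd (i : nat) (F : pt -> R) (p : pt) : R :=
  Derive (fun t => F (upd p i t)) (p i).

(* Coefficient of the (1,1)-form sqrt(-1) d dbar phi: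
     sqrt(-1) d dbar phi = sqrt(-1) sum_{j,k} (d^2 phi / dz_j d zbar_k) dz_j /\ dzbar_k,
   with d/dz_j = 1/2 (d/dx_j - i d/dy_j), d/dzbar_k = 1/2 (d/dx_k + i d/dy_k),
   z_j = x_(2j) + i x_(2j+1). *)
Definition ddbar (phi : pt -> R) (j k : nat) (p : pt) : C :=
  let xj := (2 * j)%nat in let yj := (2 * j + 1)%nat in
  let xk := (2 * k)%nat in let yk := (2 * k + 1)%nat in
  (/4 * (pd xj (pd xk phi) p + pd yj (pd yk phi) p),
   /4 * (pd xj (pd yk phi) p - pd yj (pd xk phi) p)).

(* tau = |s1|^2 + |s2|^2 = (1+|u|^2)(|w1|^2+|w2|^2) *)
Definition tau (p : pt) : R :=
  (1 + (p 0%nat)^2 + (p 1%nat)^2) *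
  ((p 2%nat)^2 + (p 3%nat)^2 + (p 4%nat)^2 + (p 5%nat)^2).

(* Kaehler potential of pi^* omega_FS : log(1+|u|^2) *)
Definition phiFS (p : pt) : R := ln (1 + (p 0%nat)^2 + (p 1%nat)^2).

Definition omega_co (a : R) (f : R -> R) (j k : nat) (p : pt) : C :=
  Cplus (RtoC (4 * a^2) * ddbar phiFS j k p)%C (ddbar (fun q => f (tau q)) j k p).

Definition sum3 (F : nat -> C) : C := (F 0%nat + F 1%nat + F 2%nat)%C.

Definition herm_form (g : nat -> nat -> C) (xi : nat -> C) : R :=
  Re (sum3 (fun j => sum3 (fun k => g j k * xi j * Cconj (xi k))))%C.

Definition det3 (g : nat -> nat -> C) : C :=
  (g 0%nat 0%nat * (g 1%nat 1%nat * g 2%nat 2%nat - g 1%nat 2%nat * g 2%nat 1%nat)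
 - g 0%nat 1%nat * (g 1%nat 0%nat * g 2%nat 2%nat - g 1%nat 2%nat * g 2%nat 0%nat)
 + g 0%nat 2%nat * (g 1%nat 0%nat * g 2%nat 1%nat - g 1%nat 1%nat * g 2%nat 0%nat))%C.

(* Top-degree forms in the chart are written as multiples of the standard volume form
     vol = (i du/\du^bar) /\ (i dw1/\dw1^bar) /\ (i dw2/\dw2^bar).
   For omega = i sum g_{jkbar} dz_j/\dzbar_k one has omega^3 = 3! det(g) vol. *)
Definition omega_cubed_coeff (a : R) (f : R -> R) (p : pt) : C :=
  (RtoC 6 * det3 (fun j k => omega_co a f j k p))%C.

(* Omega = du/\dw1/\dw2 (up to sign; dv/\dw1'/\dw2' on the other chart), and
   (sqrt -1)^9 Omega /\ Omega^bar = vol exactly (the reordering sign -1 times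
   i^9 * i^(-3) = -1), so its coefficient is 1 everywhere. *)
Definition OmegaOmegabar_coeff (p : pt) : C := RtoC 1.

Definition smooth_fun (f : R -> R) : Prop := forall n x, ex_derive_n f n x.

From Stdlib Require Import Bool Reals Lra Lia Psatz FunctionalExtensionality.
From Coquelicot Require Import Coquelicot.
Open Scope R_scope.

(* In the chart, omega is sqrt(-1) d dbar of [4 a^2 log(1 + |u|^2) + f(tau)], where
   [tau = |s|^2] for the holomorphic map [s = (w1, w1 u, w2, w2 u)]. Its Hermitian form in a
   direction [xi] is therefore
     [4 a^2 |xi_0|^2 / (1 + |u|^2)^2 + f'(tau) |ds(xi)|^2 + f''(tau) |d tau(xi)|^2],
   and since [d tau(xi) = <ds(xi), s>], Cauchy-Schwarz gives [|d tau(xi)|^2 <= tau |ds(xi)|^2];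
   so the last two terms are at least [min(f', f' + tau f'') |ds(xi)|^2] >= 0, and this bound
   is positive when [xi_0 = 0] and [xi <> 0], because [|ds(xi)|^2 >= |xi_1|^2 + |xi_2|^2].
   The determinant of omega is computed explicitly to be
   [(4 a^2 + tau f') (f'^2 + tau f' f'')], which the hypothesis on [f] makes the constant [c]. *)

Lemma upd_id (q : pt) (i : nat) : upd q i (q i) = q.
Proof.
  apply functional_extensionality; intro k; unfold upd.
  destruct (Nat.eqb_spec k i); congruence.
Qed.

Definition has_pd (i : nat) (F dF : pt -> R) : Prop :=
  forall q, is_derive (fun t => F (upd q i t)) (q i) (dF q).

Lemma pd_has_pd i F dF : has_pd i F dF -> pd i F = dF.
Proof.
  intros HF; apply functional_extensionality; intro q.
  apply is_derive_unique, HF.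
Qed.

Lemma has_pd_comp i (g : R -> R) G dG :
  (forall x, ex_derive g x) -> has_pd i G dG ->
  has_pd i (fun q => g (G q)) (fun q => Derive g (G q) * dG q).
Proof.
  intros Hg HG q.
  pose proof (is_derive_comp g (fun t => G (upd q i t)) (q i) _ _
                (Derive_correct g _ (Hg _)) (HG q)) as H.
  rewrite upd_id in H; unfold scal in H; simpl in H; unfold mult in H; simpl in H.
  rewrite Rmult_comm; exact H.
Qed.

Lemma has_pd_mult i F dF G dG :
  has_pd i F dF -> has_pd i G dG ->
  has_pd i (fun q => F q * G q) (fun q => dF q * G q + F q * dG q).
Proof.
  intros HF HG q.
  pose proof (is_derive_mult _ _ (q i) _ _ (HF q) (HG q) Rmult_comm) as H.
  cbv beta in H; rewrite upd_id in H; exact H.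
Qed.

Definition rho (q : pt) : R := 1 + q 0%nat ^ 2 + q 1%nat ^ 2.
Definition wsq (q : pt) : R := q 2%nat ^ 2 + q 3%nat ^ 2 + q 4%nat ^ 2 + q 5%nat ^ 2.

Lemma tau_rho_wsq q : tau q = rho q * wsq q.
Proof. reflexivity. Qed.

Lemma rho_pos q : 0 < rho q.
Proof. unfold rho; nra. Qed.

Lemma wsq_ge0 q : 0 <= wsq q.
Proof. unfold wsq; nra. Qed.

Lemma tau_ge0 q : 0 <= tau q.
Proof. rewrite tau_rho_wsq; apply Rmult_le_pos; [apply Rlt_le, rho_pos | apply wsq_ge0]. Qed.

Definition in_u (k : nat) : bool := Nat.ltb k 2.

Definition dtau (k : nat) (q : pt) : R :=
  2 * q k * (if in_u k then wsq q else rho q).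

Definition d2tau (i k : nat) (q : pt) : R :=
  (if Nat.eqb i k then 2 * (if in_u k then wsq q else rho q) else 0) +
  (if xorb (in_u i) (in_u k) then 4 * q i * q k else 0).

Definition dphi (k : nat) (q : pt) : R :=
  if in_u k then 2 * q k / rho q else 0.

Definition d2phi (i k : nat) (q : pt) : R :=
  if andb (in_u i) (in_u k) then
    (if Nat.eqb i k then 2 / rho q else 0) - 4 * q i * q k / rho q ^ 2
  else 0.

Lemma has_pd_tau k : (k < 6)%nat -> has_pd k tau (dtau k).
Proof.
  intros Hk q.
  do 6 (destruct k as [|k];
    [unfold tau, upd, dtau, wsq, rho; simpl; auto_derive; [trivial | ring] |]).
  lia.
Qed.

Lemma has_pd_dtau i k : (i < 6)%nat -> (k < 6)%nat -> has_pd i (dtau k) (d2tau i k).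
Proof.
  intros Hi Hk q.
  do 6 (destruct i as [|i]; [
  do 6 (destruct k as [|k];
    [unfold d2tau, upd, dtau, wsq, rho; simpl; auto_derive; [trivial | ring] |]); lia |]).
  lia.
Qed.

Lemma has_pd_phiFS k : (k < 6)%nat -> has_pd k phiFS (dphi k).
Proof.
  intros Hk q.
  do 6 (destruct k as [|k];
    [unfold phiFS, upd, dphi, rho; simpl; auto_derive; [try nra | field; nra] |]).
  lia.
Qed.

Lemma has_pd_dphi i k : (i < 6)%nat -> (k < 6)%nat -> has_pd i (dphi k) (d2phi i k).
Proof.
  intros Hi Hk q.
  do 6 (destruct i as [|i]; [
  do 6 (destruct k as [|k];
    [unfold d2phi, upd, dphi, rho; simpl; auto_derive; [try nra | field; nra] |]); lia |]).
  lia.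
Qed.

Lemma d2tau_sym i k q : d2tau i k q = d2tau k i q.
Proof.
  unfold d2tau; rewrite Nat.eqb_sym, xorb_comm.
  destruct (Nat.eqb_spec k i) as [->|_]; [reflexivity|].
  destruct (xorb _ _); ring.
Qed.

Lemma d2phi_sym i k q : d2phi i k q = d2phi k i q.
Proof.
  unfold d2phi; rewrite Nat.eqb_sym, andb_comm.
  destruct (Nat.eqb_spec k i) as [->|_]; [reflexivity|].
  destruct (andb _ _); [field; apply Rgt_not_eq, rho_pos | reflexivity].
Qed.

Lemma hessian_phiFS i k p : (i < 6)%nat -> (k < 6)%nat ->
  pd i (pd k phiFS) p = d2phi i k p.
Proof.
  intros Hi Hk.
  rewrite (pd_has_pd _ _ _ (has_pd_phiFS k Hk)), (pd_has_pd _ _ _ (has_pd_dphi i k Hi Hk)).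
  reflexivity.
Qed.

Lemma hessian_f_tau f i k p : smooth_fun f -> (i < 6)%nat -> (k < 6)%nat ->
  pd i (pd k (fun q => f (tau q))) p =
  Derive_n f 2 (tau p) * dtau i p * dtau k p + Derive f (tau p) * d2tau i k p.
Proof.
  intros Hf Hi Hk.
  rewrite (pd_has_pd _ _ _ (has_pd_comp k f _ _ (Hf 1%nat) (has_pd_tau k Hk))).
  rewrite (pd_has_pd _ _ _ (has_pd_mult i _ _ _ _
             (has_pd_comp i (Derive f) _ _ (Hf 2%nat) (has_pd_tau i Hi))
             (has_pd_dtau i k Hi Hk))).
  reflexivity.
Qed.

Definition levi (H : nat -> nat -> R) (j k : nat) : C :=
  (/4 * (H (2 * j)%nat (2 * k)%nat + H (2 * j + 1)%nat (2 * k + 1)%nat),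
   /4 * (H (2 * j)%nat (2 * k + 1)%nat - H (2 * j + 1)%nat (2 * k)%nat)).

Lemma levi_hermitian H j k :
  (forall i l, H i l = H l i) -> levi H k j = Cconj (levi H j k).
Proof.
  intros Hsym; unfold levi, Cconj; cbn [fst snd].
  rewrite (Hsym (2 * k)%nat (2 * j)%nat), (Hsym (2 * k + 1)%nat (2 * j + 1)%nat),
    (Hsym (2 * k)%nat (2 * j + 1)%nat), (Hsym (2 * k + 1)%nat (2 * j)%nat).
  apply injective_projections; simpl; ring.
Qed.

Definition omega_hessian (a : R) (f : R -> R) (p : pt) (i k : nat) : R :=
  4 * a ^ 2 * d2phi i k p +
  (Derive_n f 2 (tau p) * dtau i p * dtau k p + Derive f (tau p) * d2tau i k p).

Lemma omega_hessian_sym a f p i k : omega_hessian a f p i k = omega_hessian a f p k i.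
Proof. unfold omega_hessian; rewrite d2phi_sym, d2tau_sym; ring. Qed.

Lemma omega_co_levi a f p j k : smooth_fun f -> (j < 3)%nat -> (k < 3)%nat ->
  omega_co a f j k p = levi (omega_hessian a f p) j k.
Proof.
  intros Hf Hj Hk; unfold omega_co, ddbar, levi, omega_hessian; cbv zeta.
  rewrite !hessian_phiFS, !(hessian_f_tau f) by (assumption || lia).
  unfold Cplus, Cmult, RtoC; apply injective_projections; simpl; ring.
Qed.

Definition Cnorm2 (z : C) : R := fst z ^ 2 + snd z ^ 2.

Lemma Cnorm2_ge0 z : 0 <= Cnorm2 z.
Proof. unfold Cnorm2; nra. Qed.

Lemma Cnorm2_pos z : z <> RtoC 0 -> 0 < Cnorm2 z.
Proof.
  destruct z as [x y]; unfold Cnorm2, RtoC; simpl; intros Hz.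
  destruct (Req_dec x 0) as [->|Hx]; [destruct (Req_dec y 0) as [->|Hy]|].
  - congruence.
  - nra.
  - nra.
Qed.

Definition coord_u (q : pt) : C := (q 0%nat, q 1%nat).
Definition coord_w1 (q : pt) : C := (q 2%nat, q 3%nat).
Definition coord_w2 (q : pt) : C := (q 4%nat, q 5%nat).

Definition levi_tau (q : pt) (xi : nat -> C) : R :=
  Cnorm2 (xi 1%nat) + Cnorm2 (coord_u q * xi 1%nat + coord_w1 q * xi 0%nat)%C +
  Cnorm2 (xi 2%nat) + Cnorm2 (coord_u q * xi 2%nat + coord_w2 q * xi 0%nat)%C.

Definition dtau_dir (q : pt) (xi : nat -> C) : C :=
  (Cconj (coord_u q) * RtoC (wsq q) * xi 0%nat +
   RtoC (rho q) * (Cconj (coord_w1 q) * xi 1%nat + Cconj (coord_w2 q) * xi 2%nat))%C.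

Lemma tau_levi_tau q xi :
  tau q * levi_tau q xi =
  Cnorm2 (dtau_dir q xi) + wsq q ^ 2 * Cnorm2 (xi 0%nat) +
  rho q ^ 2 * Cnorm2 (coord_w1 q * xi 2%nat - coord_w2 q * xi 1%nat)%C.
Proof.
  unfold tau, levi_tau, dtau_dir, Cnorm2, wsq, rho, coord_u, coord_w1, coord_w2.
  destruct (xi 0%nat), (xi 1%nat), (xi 2%nat); simpl; ring.
Qed.

Lemma herm_form_omega a f p xi :
  herm_form (levi (omega_hessian a f p)) xi =
  4 * a ^ 2 / rho p ^ 2 * Cnorm2 (xi 0%nat) + Derive f (tau p) * levi_tau p xi +
  Derive_n f 2 (tau p) * Cnorm2 (dtau_dir p xi).
Proof.
  pose proof (rho_pos p) as Hrho.
  unfold herm_form, sum3, levi, omega_hessian, levi_tau, dtau_dir, Cnorm2.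
  unfold d2phi, dtau, d2tau, wsq, coord_u, coord_w1, coord_w2. unfold rho in *.
  destruct (xi 0%nat), (xi 1%nat), (xi 2%nat); simpl.
  field; lra.
Qed.

Lemma det3_omega a f p :
  det3 (levi (omega_hessian a f p)) =
  RtoC ((4 * a ^ 2 + tau p * Derive f (tau p)) *
        (Derive f (tau p) ^ 2 + tau p * Derive f (tau p) * Derive_n f 2 (tau p))).
Proof.
  pose proof (rho_pos p) as Hrho.
  unfold det3, levi, omega_hessian.
  set (F1 := Derive f (tau p)); set (F2 := Derive_n f 2 (tau p)); clearbody F1 F2.
  unfold tau, d2phi, dtau, d2tau, wsq. unfold rho in *; simpl.
  unfold Cmult, Cplus, Cminus, Copp, RtoC; simpl.
  apply injective_projections; simpl; field; lra.
Qed.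

Lemma herm_form_ext g g' xi :
  (forall j k, (j < 3)%nat -> (k < 3)%nat -> g j k = g' j k) ->
  herm_form g xi = herm_form g' xi.
Proof. intros E; unfold herm_form, sum3; rewrite !E by lia; reflexivity. Qed.

Lemma det3_ext g g' :
  (forall j k, (j < 3)%nat -> (k < 3)%nat -> g j k = g' j k) -> det3 g = det3 g'.
Proof. intros E; unfold det3; rewrite !E by lia; reflexivity. Qed.

(* With [F1 > 0] and [F1 + t F2 > 0], the sign of [F2] decides which of the two bounds
   [0 <= D <= t Q] is used. *)
Lemma Rmin_mul_le_combination F1 F2 t Q D :
  0 <= Q -> 0 <= D <= t * Q -> Rmin F1 (F1 + t * F2) * Q <= F1 * Q + F2 * D.
Proof.
  intros HQ [HD0 HD1].
  destruct (Rle_or_lt 0 F2) as [HF2|HF2].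
  - pose proof (Rmin_l F1 (F1 + t * F2)); nra.
  - pose proof (Rmin_r F1 (F1 + t * F2)); nra.
Qed.

Lemma dtau_dir_le q xi : 0 <= Cnorm2 (dtau_dir q xi) <= tau q * levi_tau q xi.
Proof.
  rewrite tau_levi_tau.
  pose proof (Cnorm2_ge0 (dtau_dir q xi)); pose proof (Cnorm2_ge0 (xi 0%nat)).
  pose proof (Cnorm2_ge0 (coord_w1 q * xi 2%nat - coord_w2 q * xi 1%nat)%C).
  split; [assumption|nra].
Qed.

Lemma levi_tau_ge q xi : Cnorm2 (xi 1%nat) + Cnorm2 (xi 2%nat) <= levi_tau q xi.
Proof.
  unfold levi_tau.
  pose proof (Cnorm2_ge0 (coord_u q * xi 1%nat + coord_w1 q * xi 0%nat)%C).
  pose proof (Cnorm2_ge0 (coord_u q * xi 2%nat + coord_w2 q * xi 0%nat)%C).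
  lra.
Qed.

Lemma herm_form_omega_pos a f p xi :
  0 < a -> 0 < Derive f (tau p) ->
  0 < Derive f (tau p) + tau p * Derive_n f 2 (tau p) ->
  (exists j, (j < 3)%nat /\ xi j <> RtoC 0) ->
  0 < herm_form (levi (omega_hessian a f p)) xi.
Proof.
  intros Ha HF1 HF2 [j [Hj Hxj]].
  rewrite herm_form_omega.
  set (F1 := Derive f (tau p)) in *; set (F2 := Derive_n f 2 (tau p)) in *.
  assert (HA : 0 < 4 * a ^ 2 / rho p ^ 2)
    by (pose proof (rho_pos p); apply Rdiv_lt_0_compat; nra).
  assert (Hm : 0 < Rmin F1 (F1 + tau p * F2)) by (apply Rmin_glb_lt; assumption).
  pose proof (Cnorm2_ge0 (xi 0%nat)); pose proof (Cnorm2_ge0 (xi 1%nat));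
    pose proof (Cnorm2_ge0 (xi 2%nat)).
  pose proof (levi_tau_ge p xi) as HQ.
  assert (Hcomb : Rmin F1 (F1 + tau p * F2) * levi_tau p xi <=
                  F1 * levi_tau p xi + F2 * Cnorm2 (dtau_dir p xi))
    by (apply Rmin_mul_le_combination; [lra | apply dtau_dir_le]).
  apply Cnorm2_pos in Hxj.
  destruct j as [|[|[|j]]]; [..|lia]; nra.
Qed.

Theorem mainTheorem7 (a : R) (f : R -> R) (c : R) :
  0 < a ->
  smooth_fun f ->
  0 < c ->
  (forall t, 0 <= t -> 0 < Derive f t) ->
  (forall t, 0 <= t -> 0 < Derive f t + t * Derive_n f 2 t) ->
  (forall t, 0 <= t ->
     (4 * a^2 + t * Derive f t) *
     ((Derive f t)^2 + t * Derive f t * Derive_n f 2 t) = c) ->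
  (* omega_{co,a} is a Kaehler metric: Hermitian and positive definite everywhere *)
  (forall p j k, (j < 3)%nat -> (k < 3)%nat ->
     omega_co a f k j p = Cconj (omega_co a f j k p)) /\
  (forall p (xi : nat -> C), (exists j, (j < 3)%nat /\ xi j <> RtoC 0) ->
     0 < herm_form (fun j k => omega_co a f j k p) xi) /\
  (* Calabi-Yau: omega^3 = lambda (sqrt -1)^9 Omega /\ Omega^bar, lambda > 0 constant *)
  (exists lambda, 0 < lambda /\
     forall p, omega_cubed_coeff a f p = (RtoC lambda * OmegaOmegabar_coeff p)%C).
Proof.
  intros Ha Hf Hc Hf1 Hf2 Hcy.
  split; [|split].
  - intros p j k Hj Hk.
    rewrite !omega_co_levi by assumption.
    apply levi_hermitian, omega_hessian_sym.
  - intros p xi Hxi.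
    rewrite (herm_form_ext _ (levi (omega_hessian a f p)))
      by (intros; apply omega_co_levi; assumption).
    apply herm_form_omega_pos; auto using tau_ge0.
  - exists (6 * c); split; [lra|].
    intros p; unfold omega_cubed_coeff, OmegaOmegabar_coeff.
    rewrite (det3_ext _ (levi (omega_hessian a f p))), det3_omega
      by (intros; apply omega_co_levi; assumption).
    rewrite Hcy by apply tau_ge0.
    unfold Cmult, RtoC; apply injective_projections; simpl; ring.
Qed.
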